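(* The expected cost of the direct referral reward scheme on the chain defined in the context is $\Theta(P_h^2\,n\,h^2)$.
   Context: Chain with agents at positions $1,2,\dots$, each independently holding an answer with probability $p=1/n$; $h\ge1$. $r(i,s)$ is the reward to the agent at position $i$ when the first answer is at position $i+s\le h$; if there is no answer among positions $1,\dots,h$ nothing is paid. Let $P_i=\sum_{j=1}^i p(1-p)^{j-1}$ and $R_i=\sum_{s=1}^{h-i} r(i,s)p(1-p)^{s-1}$ (so $R_h=0$). The scheme is defined backwards by: $r(i,1)=nR_{i+1}+P_{h-i-1}$ for $i\le h-1$; $r(i,0)=\sum_{t=i}^{h-1}r(t,1)+1$ for $1\le i\le h$; $r(i,s)=1$ if $i+s\le h$ and $s>1$; $r(i,s)=0$ otherwise. The expected cost is $\mathbb{E}[\sum_{i=1}^{J}r(i,J-i)]$ where $J$ is the position of the first answer if $J\le h$ (empty sum otherwise). *)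

From mathcomp Require Import all_boot all_order all_algebra.
From mathcomp Require Import reals.
Set Implicit Arguments. Unset Strict Implicit. Unset Printing Implicit Defensive.
Import Order.TTheory GRing.Theory Num.Theory.
Local Open Scope ring_scope.

(* Direct referral reward scheme on a chain (positions 1, 2, ...).
   n : R is the parameter with p = 1/n; h : nat is the horizon. *)
Section Chain.
Variable R : realType.

Definition pr (n : R) : R := n^-1.

Definition Pcum (n : R) (i : nat) : R :=
  \sum_(1 <= j < i.+1) pr n * (1 - pr n) ^+ j.-1.

(* Auxiliary (fuel-driven) computation of r(i,1), defined backwards in i:
   r(i,1) = n R_{i+1} + P_{h-i-1}, where
   R_{i+1} = \sum_{s=1}^{h-i-1} r(i+1,s) p (1-p)^{s-1},
   with r(i+1,1) computed recursively and r(i+1,s) = 1 for s > 1.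
   The fuel k = h - i is always sufficient. *)
Fixpoint r1f (n : R) (h : nat) (k : nat) (i : nat) : R :=
  match k with
  | 0 => 0
  | k'.+1 =>
      n * (\sum_(1 <= s < h - i)
             (if s == 1%N then r1f n h k' i.+1 else 1) * (pr n * (1 - pr n) ^+ s.-1))
      + Pcum n (h - i - 1)
  end.

Definition r1 (n : R) (h i : nat) : R := r1f n h (h - i) i.

(* The reward r(i,s) paid to the agent at position i when the first answer
   is at position i+s. *)
Definition rew (n : R) (h i s : nat) : R :=
  if (1 <= i)%N && (i + s <= h)%N then
    if s == 0%N then (\sum_(i <= t < h) r1 n h t) + 1
    else if s == 1%N then r1 n h i
    else 1
  else 0.

Definition Rsum (n : R) (h i : nat) : R :=
  \sum_(1 <= s < (h - i).+1) rew n h i s * (pr n * (1 - pr n) ^+ s.-1).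

(* Expected cost E[ \sum_{i=1}^J r(i, J-i) ], J = position of first answer,
   P(J = j) = p (1-p)^{j-1}; nothing is paid if J > h. *)
Definition expected_cost (n : R) (h : nat) : R :=
  \sum_(1 <= j < h.+1) (pr n * (1 - pr n) ^+ j.-1) *
     (\sum_(1 <= i < j.+1) rew n h i (j - i)).

End Chain.

From mathcomp Require Import all_boot all_order all_algebra.
From mathcomp Require Import reals.
From mathcomp Require Import ring lra zify.
Import Order.TTheory GRing.Theory Num.Theory.
Local Open Scope ring_scope.

(* Unrolling the backward recursion, r(i,1) = \sum_(1 <= j < h - i) ((n + 1) P_j - 1),
   and (n + 1) P_(j+1) - 1 = n P_j + p (1 - p)^j lies between n P_j and 2 n P_h.
   Hence r(i,1) = O(n h P_h), r(i,0) = O(n h^2 P_h), every other reward is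
   O(n h P_h), and the cost, a sum of at most h + 1 rewards averaged with total
   weight P_h, is O(P_h^2 n h^2).
   Conversely, for m = h %/ 4 every agent j <= m receives r(j,0) >=
   \sum_(m <= t < 2m) r(t,1) >= m^2 n P_m, which is paid with probability P_m;
   since P is subadditive (P_(8m) <= 8 P_m), n (m P_m)^2 >= n (h P_h)^2 / 4096.
   For h <= 3 the unit bonus in r(j,0) alone gives cost >= P_h >= P_h^2 n h^2 / 27. *)

Lemma ler_sum_subrange (R : numDomainType) (F : nat -> R) a b c d :
  (a <= c)%N -> (c <= d)%N -> (d <= b)%N ->
  (forall t, (a <= t < b)%N -> 0 <= F t) ->
  \sum_(c <= t < d) F t <= \sum_(a <= t < b) F t.
Proof.
move=> ac cd db F_ge0.
rewrite (big_cat_nat ac (leq_trans cd db)) (big_cat_nat cd db) /= addrCA lerDl.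
by rewrite addr_ge0 // big_nat_cond sumr_ge0 // => t /andP[/andP[a_t t_b] _];
  apply: F_ge0; lia.
Qed.

Lemma ler_sum_nat_const (R : numDomainType) (F : nat -> R) (c : R) a b k :
  (b - a <= k)%N -> 0 <= c -> (forall t, (a <= t < b)%N -> F t <= c) ->
  \sum_(a <= t < b) F t <= k%:R * c.
Proof.
move=> abk c_ge0 /ler_sum_nat /le_trans; apply.
by rewrite sumr_const_nat -[c *+ _]mulr_natl ler_wpM2r // ler_nat.
Qed.

Section Chain.
Variables (R : realType) (n : R).
Hypothesis n_ge1 : 1 <= n.

Local Notation p := (pr n).
Local Notation q := (1 - pr n).

Lemma n_gt0 : 0 < n. Proof. exact: lt_le_trans ltr01 n_ge1. Qed.
Lemma n_ge0 : 0 <= n. Proof. exact: ltW n_gt0. Qed.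
Lemma n_neq0 : n != 0. Proof. exact: lt0r_neq0 n_gt0. Qed.
Lemma mulr_pr : n * p = 1. Proof. by rewrite /pr mulfV // n_neq0. Qed.
Lemma pr_ge0 : 0 <= p. Proof. by rewrite /pr invr_ge0 n_ge0. Qed.
Lemma pr_le1 : p <= 1. Proof. by rewrite /pr invf_le1 // n_gt0. Qed.
Lemma q_ge0 : 0 <= q. Proof. by rewrite subr_ge0 pr_le1. Qed.
Lemma q_le1 : q <= 1. Proof. by rewrite lerBlDr lerDl pr_ge0. Qed.

Lemma Pcum_closed m : Pcum n m = 1 - q ^+ m.
Proof.
elim: m => [|m IH]; first by rewrite /Pcum big_geq // expr0 subrr.
by rewrite /Pcum big_nat_recr //= -/(Pcum n m) IH exprS; ring.
Qed.

Lemma Pcum_ge0 m : 0 <= Pcum n m.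
Proof. by rewrite Pcum_closed subr_ge0 exprn_ile1 ?q_ge0 ?q_le1. Qed.

Lemma Pcum_homo a b : (a <= b)%N -> Pcum n a <= Pcum n b.
Proof. by move=> ab; rewrite !Pcum_closed lerB // ler_wiXn2l ?q_ge0 ?q_le1. Qed.

Lemma Pcum_addn_le a b : Pcum n (a + b) <= Pcum n a + Pcum n b.
Proof.
rewrite !Pcum_closed exprD.
have := exprn_ge0 a q_ge0; have := exprn_ge0 b q_ge0.
have := exprn_ile1 a q_ge0 q_le1; have := exprn_ile1 b q_ge0 q_le1; nra.
Qed.

Lemma Pcum_muln_le k m : Pcum n (k * m) <= k%:R * Pcum n m.
Proof.
elim: k => [|k IH]; first by rewrite mul0n mul0r Pcum_closed expr0 subrr.
by rewrite mulSn -natr1 mulrDl mul1r addrC (le_trans (Pcum_addn_le _ _)) ?lerD2l.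
Qed.

Lemma Pcum1 : Pcum n 1 = p. Proof. by rewrite Pcum_closed expr1; ring. Qed.

Lemma mulr_Pcum_ge1 h : (1 <= h)%N -> 1 <= n * Pcum n h.
Proof.
by move=> /Pcum_homo; rewrite Pcum1 -mulr_pr => Ph; rewrite ler_wpM2l ?n_ge0.
Qed.

Lemma mulr_Pcum_le h : n * Pcum n h <= h%:R.
Proof.
suff : Pcum n h <= h%:R * p by rewrite -(ler_pM2l n_gt0) mulrCA mulr_pr mulr1.
elim: h => [|h IH]; first by rewrite Pcum_closed expr0 subrr mul0r.
rewrite Pcum_closed in IH; rewrite Pcum_closed exprS -natr1.
have := exprn_ile1 h q_ge0 q_le1; have := pr_ge0; nra.
Qed.

Lemma weight_ge0 j : 0 <= p * q ^+ j.
Proof. by rewrite mulr_ge0 ?pr_ge0 ?exprn_ge0 ?q_ge0. Qed.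

Lemma sum_weights_nat a b : (a <= b)%N ->
  \sum_(a.+1 <= j < b.+1) p * q ^+ j.-1 = Pcum n b - Pcum n a.
Proof.
by move=> ab; rewrite /Pcum (big_cat_nat (m := 1) (n := a.+1) (p := b.+1)) //=; ring.
Qed.

(* [simpl] would also unfold the recursive call, so the one-step unfolding is stated separately. *)
Lemma r1f_succ h k t : r1f n h k.+1 t =
  n * (\sum_(1 <= s < h - t) (if s == 1%N then r1f n h k t.+1 else 1) * (p * q ^+ s.-1))
  + Pcum n (h - t - 1).
Proof. by []. Qed.

Lemma r1f_closed k t h : (t + k)%N = h ->
  r1f n h k t = \sum_(0 <= j < k.-1) ((n + 1) * Pcum n j.+1 - 1).
Proof.
elim: k t => [|[|k] IH] t ht; first by rewrite big_geq.
  by rewrite r1f_succ -ht addKn big_geq // subnn Pcum_closed expr0 subrr mulr0 addr0 big_geq.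
rewrite r1f_succ (_ : (h - t = k.+2)%N); last by lia.
rewrite subSS subn0 big_ltn // eqxx expr0 mulr1.
rewrite (eq_big_nat _ _ (F2 := fun s => p * q ^+ s.-1)); last first.
  by move=> s /andP[s2 _]; rewrite gtn_eqF // mul1r.
rewrite sum_weights_nat // Pcum1 (IH t.+1); last by rewrite -ht addSnnS.
rewrite [in RHS]big_nat_recr //=.
by rewrite /pr; field; rewrite n_neq0.
Qed.

Lemma r1_closed h t : r1 n h t = \sum_(0 <= j < (h - t).-1) ((n + 1) * Pcum n j.+1 - 1).
Proof.
have [th|ht] := leqP t h; first exact/r1f_closed/subnKC.
by rewrite /r1 (_ : (h - t = 0)%N) ?big_geq //; lia.
Qed.

Lemma r1_term_ge j : n * Pcum n j <= (n + 1) * Pcum n j.+1 - 1.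
Proof.
have -> : (n + 1) * Pcum n j.+1 - 1 = n * Pcum n j + p * q ^+ j.
  by rewrite !Pcum_closed exprS /pr; field; rewrite n_neq0.
by rewrite lerDl mulr_ge0 ?pr_ge0 ?exprn_ge0 ?q_ge0.
Qed.

Lemma r1_term_le h j : (j <= h)%N -> (n + 1) * Pcum n j - 1 <= 2 * n * Pcum n h.
Proof. move=> /Pcum_homo; have := Pcum_ge0 j; have := n_ge1; nra. Qed.

Lemma r1_term_ge0 j : 0 <= (n + 1) * Pcum n j.+1 - 1.
Proof. exact: le_trans (mulr_ge0 n_ge0 (Pcum_ge0 j)) (r1_term_ge j). Qed.

Lemma r1_ge0 h t : 0 <= r1 n h t.
Proof. by rewrite r1_closed sumr_ge0 // => j _; apply: r1_term_ge0. Qed.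

Lemma r1_le h t : r1 n h t <= h%:R * (2 * n * Pcum n h).
Proof.
rewrite r1_closed; apply: ler_sum_nat_const => [||j /andP[_ jh]]; first by lia.
  by rewrite !mulr_ge0 ?Pcum_ge0 ?n_ge0.
by apply: r1_term_le; lia.
Qed.

Lemma r1_ge_window h t m : (t + 2 * m < h)%N -> m%:R * (n * Pcum n m) <= r1 n h t.
Proof.
move=> tmh; rewrite r1_closed.
apply: le_trans _ (@ler_sum_subrange _ _ 0 _ m (2 * m) _ _ _ _); try lia; last first.
  by move=> j _; apply: r1_term_ge0.
apply: le_trans _ (ler_sum_nat (F := fun _ => n * Pcum n m) _); last first.
  move=> j /andP[mj _]; apply: le_trans _ (r1_term_ge j).
  by rewrite ler_wpM2l ?Pcum_homo // n_ge0.
by rewrite sumr_const_nat mulr_natl (_ : (2 * m - m = m)%N) //; lia.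
Qed.

Lemma rew0 h i : (1 <= i <= h)%N -> rew n h i 0 = \sum_(i <= t < h) r1 n h t + 1.
Proof. by move=> /andP[i1 ih]; rewrite /rew i1 addn0 ih. Qed.

Lemma rew_ge0 h i s : 0 <= rew n h i s.
Proof.
rewrite /rew; case: ifP => // _; case: ifP => _; last by case: ifP => _; rewrite ?r1_ge0.
by rewrite addr_ge0 // sumr_ge0 // => t _; apply: r1_ge0.
Qed.

Lemma rew0_le h i : (1 <= h)%N -> rew n h i 0 <= 3 * (n * Pcum n h * h%:R ^+ 2).
Proof.
move=> h1; have nPh := mulr_Pcum_ge1 _ h1; have hR : 1 <= h%:R :> R by rewrite ler1n.
have nPh2 : 1 <= n * Pcum n h * h%:R ^+ 2 by rewrite expr2; nra.
rewrite /rew; case: ifP => _; last by lra.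
have : \sum_(i <= t < h) r1 n h t <= h%:R * (h%:R * (2 * n * Pcum n h)).
  apply: ler_sum_nat_const => [||t _]; [lia | | exact: r1_le].
  by rewrite !mulr_ge0 ?Pcum_ge0 ?n_ge0.
rewrite (_ : _ * (_ * _) = 2 * (n * Pcum n h * h%:R ^+ 2)); [lra | ring].
Qed.

Lemma rew_le h i s : (1 <= h)%N -> (0 < s)%N -> rew n h i s <= 3 * (n * Pcum n h * h%:R).
Proof.
move=> h1 s0; have nPh := mulr_Pcum_ge1 _ h1; have hR : 1 <= h%:R :> R by rewrite ler1n.
have nPh1 : 1 <= n * Pcum n h * h%:R by nra.
rewrite /rew gtn_eqF //; case: ifP => _; last by lra.
case: ifP => _; last by lra.
have := r1_le h i; rewrite (_ : _ * (_ * _) = 2 * (n * Pcum n h * h%:R)); [lra | ring].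
Qed.

Lemma sum_rew_le h j : (1 <= h)%N -> (j <= h)%N ->
  \sum_(1 <= i < j.+1) rew n h i (j - i) <= 6 * (n * Pcum n h * h%:R ^+ 2).
Proof.
move=> h1 jh; have [->|j0] := posnP j.
  by rewrite big_geq // !mulr_ge0 ?Pcum_ge0 ?exprn_ge0 ?n_ge0.
rewrite big_nat_recr //= subnn.
have : \sum_(1 <= i < j) rew n h i (j - i) <= h%:R * (3 * (n * Pcum n h * h%:R)).
  apply: ler_sum_nat_const => [||i /andP[_ ij]]; first by lia.
    by rewrite !mulr_ge0 ?Pcum_ge0 ?n_ge0.
  by apply: rew_le; rewrite ?subn_gt0.
have := rew0_le h j h1.
rewrite (_ : _ * (_ * _) = 3 * (n * Pcum n h * h%:R ^+ 2)); [lra | ring].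
Qed.

Lemma cost_le h : (1 <= h)%N -> expected_cost n h <= 6 * (Pcum n h ^+ 2 * n * h%:R ^+ 2).
Proof.
move=> h1; set B := 6 * (n * Pcum n h * h%:R ^+ 2).
apply: le_trans (ler_sum_nat (G := fun j => p * q ^+ j.-1 * B) _) _ => [j /andP[_ jh]|].
  by rewrite ler_wpM2l ?weight_ge0 ?sum_rew_le.
by rewrite -mulr_suml -/(Pcum n h) /B; lra.
Qed.

Lemma cost_ge_rew0 h : \sum_(1 <= j < h.+1) p * q ^+ j.-1 * rew n h j 0 <= expected_cost n h.
Proof.
apply: ler_sum_nat => j /andP[j1 jh]; rewrite ler_wpM2l ?weight_ge0 //.
by rewrite big_nat_recr //= subnn lerDr sumr_ge0 // => i _; apply: rew_ge0.
Qed.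

Lemma cost_ge_Pcum h : Pcum n h <= expected_cost n h.
Proof.
apply: le_trans _ (cost_ge_rew0 h); apply: ler_sum_nat => j /andP[j1 jh].
rewrite -[X in X <= _]mulr1 ler_wpM2l ?weight_ge0 // rew0 ?j1 // lerDr.
by rewrite sumr_ge0 // => t _; apply: r1_ge0.
Qed.

Lemma rew0_ge_window h m j : (4 * m <= h)%N -> (1 <= j <= m)%N ->
  m%:R * (m%:R * (n * Pcum n m)) <= rew n h j 0.
Proof.
move=> mh /andP[j1 jm]; rewrite rew0 ?j1; last by lia.
have : \sum_(m <= t < 2 * m) r1 n h t <= \sum_(j <= t < h) r1 n h t.
  by apply: ler_sum_subrange; try lia; move=> t _; apply: r1_ge0.
have : m%:R * (m%:R * (n * Pcum n m)) <= \sum_(m <= t < 2 * m) r1 n h t.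
  apply: le_trans _ (ler_sum_nat (F := fun _ => m%:R * (n * Pcum n m)) _).
    by rewrite sumr_const_nat mulr_natl (_ : (2 * m - m = m)%N) //; lia.
  by move=> t /andP[_ t2m]; apply: r1_ge_window; lia.
lra.
Qed.

Lemma cost_ge_window h m : (4 * m <= h)%N -> n * (m%:R * Pcum n m) ^+ 2 <= expected_cost n h.
Proof.
move=> mh; set K := m%:R * (m%:R * (n * Pcum n m)).
apply: le_trans _ (cost_ge_rew0 h).
apply: le_trans _ (@ler_sum_subrange _ _ 1 h.+1 1 m.+1 _ _ _ _); try lia; last first.
  by move=> j _; rewrite mulr_ge0 ?weight_ge0 ?rew_ge0.
apply: le_trans _ (ler_sum_nat (F := fun j => p * q ^+ j.-1 * K) _); last first.
  by move=> j jm; rewrite ler_wpM2l ?weight_ge0 ?rew0_ge_window.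
by rewrite -mulr_suml -/(Pcum n m) /K; lra.
Qed.

Lemma cost_ge_small h : (h <= 3)%N ->
  Pcum n h ^+ 2 * n * h%:R ^+ 2 <= 27 * expected_cost n h.
Proof.
move=> h3; have hR : h%:R <= 3 :> R by rewrite (ler_nat R h 3).
have nPh2 : n * Pcum n h * h%:R ^+ 2 <= 27.
  have := mulr_Pcum_le h; have := ler0n R h; rewrite expr2; nra.
rewrite (_ : _ * n * _ = Pcum n h * (n * Pcum n h * h%:R ^+ 2)); last by ring.
have := cost_ge_Pcum h; have := Pcum_ge0 h; nra.
Qed.

Lemma cost_ge_large h : (4 <= h)%N ->
  Pcum n h ^+ 2 * n * h%:R ^+ 2 <= 4096 * expected_cost n h.
Proof.
move=> h4; set m := (h %/ 4)%N.
have [m4 m8] : (4 * m <= h)%N /\ (h <= 8 * m)%N by rewrite /m; lia.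
have h8m : h%:R <= 8 * m%:R :> R by rewrite -natrM ler_nat.
have P8m : Pcum n h <= 8 * Pcum n m := le_trans (Pcum_homo _ _ m8) (Pcum_muln_le 8 m).
have hP : h%:R * Pcum n h <= 64 * (m%:R * Pcum n m).
  rewrite (_ : 64 * _ = (8 * m%:R) * (8 * Pcum n m)); last by ring.
  exact: ler_pM (ler0n R h) (Pcum_ge0 h) h8m P8m.
have hP2 : (h%:R * Pcum n h) ^+ 2 <= 4096 * (m%:R * Pcum n m) ^+ 2.
  rewrite (_ : 4096 * _ = (64 * (m%:R * Pcum n m)) ^+ 2); last by ring.
  by apply: lerXn2r; rewrite // nnegrE !mulr_ge0 ?Pcum_ge0.
rewrite (_ : _ * n * _ = n * (h%:R * Pcum n h) ^+ 2); last by ring.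
apply: le_trans (ler_wpM2l n_ge0 hP2) _.
by rewrite mulrCA ler_wpM2l // cost_ge_window.
Qed.

Lemma cost_ge h : 1 / 4096 * (Pcum n h ^+ 2 * n * h%:R ^+ 2) <= expected_cost n h.
Proof.
have := cost_ge_Pcum h; have := Pcum_ge0 h.
by case: (leqP h 3) => [/cost_ge_small | /cost_ge_large]; lra.
Qed.

End Chain.

Theorem lemma4p3 (R : realType) :
  exists c1 c2 : R, 0 < c1 /\ 0 < c2 /\
    forall (n : R) (h : nat), 1 <= n -> (1 <= h)%N ->
      c1 * (Pcum n h ^+ 2 * n * (h%:R) ^+ 2) <= expected_cost n h /\
      expected_cost n h <= c2 * (Pcum n h ^+ 2 * n * (h%:R) ^+ 2).
Proof.
exists (1 / 4096), 6; do 2 (split; first lra).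
by move=> n h n_ge1 h1; split; [exact: cost_ge | exact: cost_le].
Qed.
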